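(* Let $m_1,m_2,r,n_1,n_2$ be nonnegative integers with $0\le n_2\le n_1$ and $n_1\ge 1$, and let $\gamma_{ik}\in\mathbb{C}$, $i=1,\dots,n_1-n_2$, $k=1,\dots,n_1$, be independent identically distributed random scalars drawn from a continuous (absolutely continuous) distribution on $\mathbb{C}$. Then, almost surely, the following holds: for every family of matrices $\mathbf{A}_1,\dots,\mathbf{A}_{n_1}\in\mathbb{C}^{m_1\times m_2}$ with $\operatorname{rank}(\mathbf{A}_k)\le r$ for all $k$ and \[ \gamma_{i1}\mathbf{A}_1+\gamma_{i2}\mathbf{A}_2+\cdots+\gamma_{in_1}\mathbf{A}_{n_1}=\mathbf{0}\qquad\text{for all } i=1,2,\dots,n_1-n_2, \] we have \[ \dim\Big(\mathcal{C}\big(\mathbf{A}_1,\mathbf{A}_2,\dots,\mathbf{A}_{n_1}\big)\Big)\le n_2 r . \] Moreover, equality holds if, among the $n_1$ subspaces $\mathcal{C}(\mathbf{A}_k)$, some $n_2$ of them have dimension $r$ and are linearly independent (their sum is direct), and $m_1\ge n_2 r$.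
   Context: $\mathcal{C}(\mathbf{A}_1,\dots,\mathbf{A}_n)$ denotes the column space of the horizontally concatenated matrix $[\mathbf{A}_1\ \mathbf{A}_2\ \cdots\ \mathbf{A}_n]$. *)

From HB Require Import structures.
From mathcomp Require Import all_boot all_order all_algebra.
From mathcomp Require Import all_classical all_reals all_analysis.
From mathcomp Require Import complex.

Set Implicit Arguments.
Unset Strict Implicit.
Unset Printing Implicit Defensive.

Import Order.TTheory GRing.Theory Num.Theory.
Local Open Scope ring_scope.
Local Open Scope classical_set_scope.

(* A complex-valued random variable is represented by its pair
   (real part, imaginary part) : R * R, which carries the product
   (Borel) measurable structure; [to_C] turns such a pair into a complex. *)
Definition to_C (R : realType) (z : (R * R)%type) : R[i] := Complex z.1 z.2.

Definition lebesgue2 (R : realType) :=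
  (lebesgue_measure \x (@lebesgue_measure R))%E.

(* Mutual independence of a finite family of random variables: the joint law
   is the product of the marginals on all measurable rectangles (choosing
   B i = setT recovers the product rule for every subfamily). *)
Definition mutually_independent d d' (Omega : measurableType d)
  (T : measurableType d') (R : realType) (P : probability Omega R)
  (I : finType) (X : I -> {mfun Omega >-> T}) : Prop :=
  forall B : I -> set T, (forall i, measurable (B i)) ->
    P (\bigcap_i (X i @^-1` B i)) = (\prod_(i : I) P (X i @^-1` B i))%E.

Definition identically_distributed d d' (Omega : measurableType d)
  (T : measurableType d') (R : realType) (P : probability Omega R)
  (I : finType) (X : I -> {mfun Omega >-> T}) : Prop :=
  forall i j (B : set T), measurable B ->
    distribution P (X i) B = distribution P (X j) B.

(* The first n1 - n2 columns of the coefficient matrix form a square random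
   matrix with independent, absolutely continuous entries, so its determinant
   is almost surely nonzero: with x the corner entry, det = x m + b where m is
   the complementary minor (nonzero almost surely, by induction) and m, b are
   independent of x, so x m + b = 0 forces x onto the single point -b/m, a
   Lebesgue null set.  When this block is invertible, the relations express
   A_1, ..., A_(n1-n2) through the last n2 matrices, whence the column space
   has dimension at most n2 r; the equality case is the direct-sum hypothesis. *)

From HB Require Import structures.
From mathcomp Require Import all_boot all_order all_algebra.
From mathcomp Require Import all_classical all_reals all_analysis.
From mathcomp Require Import complex.

Import Order.TTheory GRing.Theory Num.Theory.
Local Open Scope ring_scope.
Local Open Scope classical_set_scope.

Section ColumnSpaceRank.
Context {F : fieldType} {m1 m2 n : nat} (A : 'I_n -> 'M[F]_(m1, m2)).

Lemma mxrank_mxrow : \rank (\mxrow_(l < n) A l) = \rank (\sum_l <<(A l)^T>>)%MS.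
Proof. by rewrite -mxrank_tr tr_mxrow (eqmx_col (fun l => (A l)^T)). Qed.

Lemma mxrank_mxrow_direct_ge (S : {set 'I_n}) r :
  (forall l, l \in S -> \rank (A l) = r) ->
  mxdirect (\sum_(l in S) <<(A l)^T>>)%MS ->
  (#|S| * r <= \rank (\mxrow_(l < n) A l))%N.
Proof.
move=> rS dS; rewrite mxrank_mxrow.
have subS : ((\sum_(l in S) <<(A l)^T>>) <= \sum_l <<(A l)^T>>)%MS.
  by apply/sumsmx_subP => l _; rewrite (sumsmx_sup l).
apply: leq_trans (mxrankS subS); rewrite (mxdirectP dS) /=.
by rewrite (eq_bigr (fun=> r)) ?sum_nat_const // => l lS; rewrite genmxE mxrank_tr rS.
Qed.

Lemma sum_scale_mulmx_eq0 {p q} (g : 'M[F]_(p, n)) (N : 'M[F]_(q, p)) :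
  (forall i, \sum_l g i l *: A l = 0) ->
  forall t, \sum_l (N *m g) t l *: A l = 0.
Proof.
move=> rel t; under eq_bigr do rewrite mxE scaler_suml.
rewrite exchange_big big1 //= => i _.
by under eq_bigr do rewrite -scalerA; rewrite -scaler_sumr rel scaler0.
Qed.

Context {k : nat} (le_k_n : (k <= n)%N).
Let lead := widen_ord le_k_n.

Lemma lead_or_tail (l : 'I_n) : (k <= l)%N \/ exists t, l = lead t.
Proof.
by case: (leqP k l) => [|lt_lk]; [left | right; exists (Ordinal lt_lk); exact: val_inj].
Qed.

Lemma unit_rel_submx_tail (h : 'I_n -> F) (t : 'I_k) :
  \sum_l h l *: A l = 0 -> (forall b, h (lead b) = (t == b)%:R) ->
  ((A (lead t))^T <= \sum_(l : 'I_n | (k <= l)%N) <<(A l)^T>>)%MS.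
Proof.
move=> rel h_lead.
have head : \sum_(l : 'I_n | ~~ (k <= l)%N) h l *: A l = A (lead t).
  rewrite (bigD1 (lead t)) /= -?ltnNge // h_lead eqxx scale1r big1 ?addr0 //.
  move=> l /andP[tail_l ne_lt]; case: (lead_or_tail l) => [|[b el]].
    by rewrite (negbTE tail_l).
  move: ne_lt; rewrite el h_lead.
  by case: (eqVneq t b) => [->|_ _]; rewrite ?eqxx ?scale0r.
move: rel; rewrite (bigID (fun l : 'I_n => (k <= l)%N)) /= head addrC => /eqP.
rewrite addr_eq0 => /eqP ->; rewrite linearN /= eqmx_opp linear_sum /=.
apply: summx_sub => l tail_l; rewrite linearZ /= scalemx_sub //.
by rewrite (sumsmx_sup l) // genmxE.
Qed.

Lemma mxrank_mxrow_rel_le (g : 'M[F]_(k, n)) :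
  \matrix_(a, b) g a (lead b) \in unitmx ->
  (forall i, \sum_l g i l *: A l = 0) ->
  (\rank (\mxrow_(l < n) A l) <= \sum_(l : 'I_n | (k <= l)%N) \rank (A l))%N.
Proof.
set G := \matrix_(a, b) _ => unitG rel.
have sub_tail :
    ((\sum_l <<(A l)^T>>) <= \sum_(l : 'I_n | (k <= l)%N) <<(A l)^T>>)%MS.
  apply/sumsmx_subP => l _; rewrite genmxE.
  case: (lead_or_tail l) => [tail_l|[t ->]].
    by rewrite (sumsmx_sup l) // genmxE.
  apply: (unit_rel_submx_tail _ _ (sum_scale_mulmx_eq0 _ (invmx G) rel t)) => b.
  have := congr1 (fun M : 'M[F]_k => M t b) (mulVmx unitG); rewrite !mxE => <-.
  by apply: eq_bigr => i _; rewrite mxE.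
rewrite mxrank_mxrow; apply: leq_trans (mxrankS sub_tail) _.
apply: leq_trans (mxrank_sum_leqif _).1 _.
by rewrite /=; apply: leq_sum => l _; rewrite genmxE mxrank_tr.
Qed.

Lemma mxrank_mxrow_rel_le_mul r (g : 'M[F]_(k, n)) :
  \matrix_(a, b) g a (lead b) \in unitmx ->
  (forall i, \sum_l g i l *: A l = 0) -> (forall l, \rank (A l) <= r)%N ->
  (\rank (\mxrow_(l < n) A l) <= (n - k) * r)%N.
Proof.
move=> unitG rel rankA; apply: leq_trans (mxrank_mxrow_rel_le g unitG rel) _.
apply: (@leq_trans (\sum_(l : 'I_n | (k <= l)%N) r)); first exact: leq_sum.
rewrite (eq_bigl (fun l : 'I_n => true && (k <= l)%N)) //.
by rewrite -(big_geq_mkord k n xpredT (fun=> r)) sum_nat_const_nat.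
Qed.

End ColumnSpaceRank.

Section ComplexMeasurable.
Context {R : realType} {d : measure_display} {T : measurableType d}.

Definition cmeasurable (f : T -> R[i]) :=
  measurable_fun setT (fun t => complex.Re (f t)) /\
  measurable_fun setT (fun t => complex.Im (f t)).

Lemma cmeasurable_cst c : cmeasurable (fun=> c).
Proof. by split; exact: measurable_cst. Qed.

Lemma cmeasurableD f g :
  cmeasurable f -> cmeasurable g -> cmeasurable (fun t => f t + g t).
Proof.
move=> [mf1 mf2] [mg1 mg2]; split.
- have -> : (fun t => complex.Re (f t + g t)) =
    (fun t => complex.Re (f t)) \+ (fun t => complex.Re (g t)).
    by apply/funext => t /=; case: (f t); case: (g t).
  exact: measurable_realfun.measurable_funD.
- have -> : (fun t => complex.Im (f t + g t)) =
    (fun t => complex.Im (f t)) \+ (fun t => complex.Im (g t)).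
    by apply/funext => t /=; case: (f t); case: (g t).
  exact: measurable_realfun.measurable_funD.
Qed.

Lemma cmeasurableM f g :
  cmeasurable f -> cmeasurable g -> cmeasurable (fun t => f t * g t).
Proof.
move=> [mf1 mf2] [mg1 mg2]; split.
- have -> : (fun t => complex.Re (f t * g t)) =
    ((fun t => complex.Re (f t)) \* (fun t => complex.Re (g t))) \-
    ((fun t => complex.Im (f t)) \* (fun t => complex.Im (g t))).
    by apply/funext => t /=; case: (f t); case: (g t).
  by apply: measurable_realfun.measurable_funB;
    apply: measurable_realfun.measurable_funM.
- have -> : (fun t => complex.Im (f t * g t)) =
    ((fun t => complex.Re (f t)) \* (fun t => complex.Im (g t))) \+
    ((fun t => complex.Im (f t)) \* (fun t => complex.Re (g t))).
    by apply/funext => t /=; case: (f t); case: (g t).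
  by apply: measurable_realfun.measurable_funD;
    apply: measurable_realfun.measurable_funM.
Qed.

Lemma cmeasurable_sum (I : Type) (s : seq I) (P : pred I) (F : I -> T -> R[i]) :
  (forall i, cmeasurable (F i)) -> cmeasurable (fun t => \sum_(i <- s | P i) F i t).
Proof.
move=> mF; elim: s => [|a s IH].
  by under eq_fun do rewrite big_nil; exact: cmeasurable_cst.
under eq_fun do rewrite big_cons.
by case: (P a) => //; apply: cmeasurableD.
Qed.

Lemma cmeasurable_prod (I : Type) (s : seq I) (F : I -> T -> R[i]) :
  (forall i, cmeasurable (F i)) -> cmeasurable (fun t => \prod_(i <- s) F i t).
Proof.
move=> mF; elim: s => [|a s IH].
  by under eq_fun do rewrite big_nil; exact: cmeasurable_cst.
by under eq_fun do rewrite big_cons; apply: cmeasurableM.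
Qed.

Lemma cmeasurable_det n (M : T -> 'M[R[i]]_n) :
  (forall i j, cmeasurable (fun t => M t i j)) -> cmeasurable (fun t => \det (M t)).
Proof.
move=> mM; apply: cmeasurable_sum => s.
by apply: cmeasurableM; [exact: cmeasurable_cst | exact: cmeasurable_prod].
Qed.

Lemma cmeasurable_to_C (f : T -> (R * R)%type) :
  measurable_fun setT f -> cmeasurable (fun t => to_C (f t)).
Proof.
move=> mf; split.
- exact: (measurableT_comp (@measurable_fst _ _ R R) mf).
- exact: (measurableT_comp (@measurable_snd _ _ R R) mf).
Qed.

Lemma measurable_cmeasurable_eq0 f : cmeasurable f -> measurable [set t | f t = 0].
Proof.
move=> [mf1 mf2].
have -> : [set t | f t = 0] =
    (setT `&` (fun t => complex.Re (f t)) @^-1` [set 0]) `&`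
    (setT `&` (fun t => complex.Im (f t)) @^-1` [set 0]).
  apply/seteqP; split => t /=; first by move=> ->.
  by case: (f t) => a b /= [[_ ->] [_ ->]].
by apply: measurableI; [exact: mf1 | exact: mf2].
Qed.

End ComplexMeasurable.

Section IndependentComponent.
Context {R : realType} {d : measure_display} {Omega : measurableType d}
  {P : probability Omega R} {I : finType}
  {X : I -> {mfun Omega >-> (R * R)%type}}.
Hypothesis indep : mutually_independent P X.
Variable j0 : I.

Lemma measurable_preimage_X i {B : set (R * R)%type} :
  measurable B -> measurable (X i @^-1` B).
Proof. by move=> mB; rewrite -[X in measurable X]setTI; exact: measurable_funPT. Qed.

(* A pi-system generating the sigma-algebra of the [X i] with [i != j0]. *)
Definition rects_off : set (set Omega) :=
  [set E | exists B : I -> set (R * R)%type,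
    [/\ forall i, measurable (B i), B j0 = setT & E = \bigcap_i (X i @^-1` B i)]].

Local Notation sigma_off := (g_sigma_algebraType rects_off).

Lemma rects_off_measurable : rects_off `<=` measurable.
Proof.
move=> _ [B [mB _ ->]]; apply: fin_bigcap_measurable; first exact: finite_finset.
by move=> i _; exact: measurable_preimage_X.
Qed.

Lemma rects_offT : rects_off setT.
Proof. by exists (fun=> setT); split => //; apply/seteqP; split => w //= _ i _. Qed.

Lemma rects_off_setI : setI_closed rects_off.
Proof.
move=> _ _ [B1 [mB1 B1j ->]] [B2 [mB2 B2j ->]].
exists (fun i => B1 i `&` B2 i); split.
- by move=> i; exact: measurableI.
- by rewrite B1j B2j setIT.
- apply/seteqP; split => w /=.
    by move=> [H1 H2] i _; split; [exact: H1 | exact: H2].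
  by move=> H; split => i _; have [] := H i Logic.I.
Qed.

Lemma rects_off_indep A : measurable A -> forall E, rects_off E ->
  P (X j0 @^-1` A `&` E) = (P (X j0 @^-1` A) * P E)%E.
Proof.
move=> mA _ [B [mB Bj0 ->]].
pose B' i := if i == j0 then A else B i.
have mB' i : measurable (B' i) by rewrite /B'; case: eqP.
have -> : X j0 @^-1` A `&` \bigcap_i X i @^-1` B i = \bigcap_i X i @^-1` B' i.
  apply/seteqP; split => w /=.
    by move=> [XA H] i _; rewrite /B'; case: eqP => [->//|_]; exact: H.
  move=> H; split; first by have := H j0 Logic.I; rewrite /B' eqxx.
  by move=> i _; have := H i Logic.I; rewrite /B'; case: eqP => [->|//]; rewrite Bj0.
rewrite (indep B' mB') (indep B mB) (bigD1 j0) //= [in RHS](bigD1 j0) //=.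
rewrite /B' eqxx Bj0 preimage_setT probability_setT mul1e.
by congr (_ * _)%E; apply: eq_bigr => i /negbTE ->.
Qed.

(* Both sides are finite measures in [E] agreeing on the pi-system [rects_off]. *)
Lemma sigma_off_indep A : measurable A -> forall E, <<s rects_off >> E ->
  P (X j0 @^-1` A `&` E) = (P (X j0 @^-1` A) * P E)%E.
Proof.
move=> mA E offE.
have mXA := measurable_preimage_X j0 mA.
have PXA_ge0 : (0 <= fine (P (X j0 @^-1` A)))%R := fine_ge0 (measure_ge0 _ _).
have PXA_fin := fineK (fin_num_measure P _ mXA).
pose mu := mrestr P mXA.
pose nu := mscale (NngNum PXA_ge0) P.
have muE F : mu F = P (F `&` X j0 @^-1` A) by [].
have nuE F : nu F = (P (X j0 @^-1` A) * P F)%E by rewrite -[in RHS]PXA_fin.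
rewrite setIC -muE -nuE.
apply: (@g_sigma_algebra_measure_unique _ R Omega rects_off rects_off_measurable
  (fun=> setT) (fun=> rects_offT) _ mu nu rects_off_setI) => //.
- by apply/seteqP; split => w // _; exists 0%N.
- move=> F offF; transitivity (P (F `&` X j0 @^-1` A)) => //.
  by rewrite setIC rects_off_indep // -nuE.
- move=> _; change (P (setT `&` X j0 @^-1` A) < +oo)%E.
  by rewrite setTI -ge0_fin_numE // fin_num_measure.
Qed.

Lemma measurable_off {du} {U : measurableType du} {Z : sigma_off -> U} :
  measurable_fun setT Z -> measurable_fun (T := Omega) setT Z.
Proof.
move=> mZ _ S mS; apply: (smallest_sub (@sigma_algebra_measurable _ Omega)).
- exact: rects_off_measurable.
- exact: mZ.
Qed.

(* [X j0] is independent of [Z], so the law of [(Z, X j0)] is the product of the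
   laws and Fubini's theorem integrates the null sections. *)
Lemma negligible_off_xsection {du} {U : measurableType du} {Z : sigma_off -> U}
    {D : set (U * (R * R))%type} :
  measurable_fun setT Z -> measurable D ->
  (forall u, distribution P (X j0) (xsection D u) = 0%E) ->
  P.-negligible [set w | D (Z w, X j0 w)].
Proof.
move=> mZ mD null_sections.
have mZ' := measurable_off mZ.
have mW : measurable_fun (T := Omega) setT (fun w => (Z w, X j0 w)).
  exact: measurable_fun_pair.
pose Zm : {mfun Omega >-> U} := mfun_Sub (mem_set mZ' : (Z : Omega -> U) \in mfun).
pose Wm : {mfun Omega >-> (U * (R * R))%type} :=
  mfun_Sub (mem_set mW : ((fun w => (Z w, X j0 w)) : Omega -> _) \in mfun).
have law_pair :
    (distribution P Zm \x distribution P (X j0))%E D = distribution P Wm D.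
  apply: product_measure_unique => // S B mS mB.
  change (P ((fun w => (Z w, X j0 w)) @^-1` (S `*` B)) =
    (P (Z @^-1` S) * P (X j0 @^-1` B))%E).
  have -> : (fun w => (Z w, X j0 w)) @^-1` (S `*` B) =
      X j0 @^-1` B `&` (setT `&` Z @^-1` S).
    by apply/seteqP; split => w /=; [move=> [? ?] | move=> [? [_ ?]]].
  by rewrite sigma_off_indep //; [rewrite muleC setTI | exact: mZ].
exists [set w | D (Z w, X j0 w)]; split => //.
  by rewrite -[X in measurable X]setTI; exact: (mW).
change (distribution P Wm D = 0)%E; rewrite -law_pair.
change (\int[distribution P Zm]_u distribution P (X j0) (xsection D u) = 0)%E.
by apply: integral0_eq => u _; exact: null_sections.
Qed.
End IndependentComponent.

Lemma det_split_corner (F : comNzRingType) n (A : 'M[F]_n.+1) :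
  \det A = A ord0 ord0 * \det (row' ord0 (col' ord0 A)) +
    \det (\matrix_(a, b) (if (a == ord0) && (b == ord0) then 0 else A a b)).
Proof.
set A0 := \matrix_(a, b) _.
have lift_neq0 (a : 'I_n) : (lift ord0 a == ord0) = false.
  by rewrite eq_sym (negbTE (neq_lift _ _)).
have cofactorE j : cofactor A ord0 j = cofactor A0 ord0 j.
  rewrite /cofactor; congr (_ * \det _); apply/matrixP => a b.
  by rewrite !mxE lift_neq0.
rewrite (expand_det_row _ ord0) [\det A0](expand_det_row _ ord0).
rewrite (bigD1 ord0) // [X in _ = _ + X](bigD1 ord0) //=.
rewrite mxE eqxx /= mul0r add0r /cofactor addn0 expr0 mul1r.
congr (_ + _); apply: eq_bigr => j j_neq0; rewrite -/(cofactor A _ _) cofactorE mxE.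
by rewrite (negbTE j_neq0) andbF.
Qed.

Lemma to_C_ReIm {R : realType} (z : R[i]) : to_C (complex.Re z, complex.Im z) = z.
Proof. by case: z. Qed.

Lemma lebesgue2_set1 {R : realType} (p : (R * R)%type) :
  (@lebesgue2 R).-null_set [set p].
Proof.
have -> : [set p] = [set p.1] `*` [set p.2].
  by apply/seteqP; split => -[x y] /=; [move=> <- | case: p => ? ? /= [-> ->]].
have m1 : measurable [set p.1] := measurable_set1 _.
have m2 : measurable [set p.2] := measurable_set1 _.
apply/measure0_null_setP; first exact: measurableX.
transitivity (@lebesgue_measure R [set p.1] * @lebesgue_measure R [set p.2])%E.
  exact: product_measure1E.
by rewrite lebesgue_measure_set1 mul0e.
Qed.

(* Triples (a, b, x) of complex numbers, each encoded as a pair of reals, with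
   a != 0 and x a + b = 0. *)
Definition affine_zeros (R : realType) : set (((R * R) * (R * R)) * (R * R))%type :=
  [set p | to_C p.1.1 != 0 /\ to_C p.2 * to_C p.1.1 + to_C p.1.2 = 0].

Lemma measurable_affine_zeros (R : realType) : measurable (affine_zeros R).
Proof.
have ma : cmeasurable (fun p : (((R * R) * (R * R)) * (R * R))%type => to_C p.1.1).
  by apply: cmeasurable_to_C; exact: (measurableT_comp measurable_fst measurable_fst).
have mb : cmeasurable (fun p : (((R * R) * (R * R)) * (R * R))%type => to_C p.1.2).
  by apply: cmeasurable_to_C; exact: (measurableT_comp measurable_snd measurable_fst).
have mx : cmeasurable (fun p : (((R * R) * (R * R)) * (R * R))%type => to_C p.2).
  by apply: cmeasurable_to_C; exact: measurable_snd.
have -> : affine_zeros R = ~` [set p | to_C p.1.1 = 0] `&`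
    [set p | to_C p.2 * to_C p.1.1 + to_C p.1.2 = 0].
  by apply/seteqP; split => p /= [/eqP a_neq0 zero].
apply: measurableI; first exact/measurableC/measurable_cmeasurable_eq0.
by apply: measurable_cmeasurable_eq0; apply: cmeasurableD => //; exact: cmeasurableM.
Qed.

(* For fixed (a, b) the section is empty or the single point x = - b / a. *)
Lemma affine_zeros_xsection_null {R : realType}
    {mu : {measure set (R * R)%type -> \bar R}} (u : ((R * R) * (R * R))%type) :
  mu `<< @lebesgue2 R -> mu (xsection (affine_zeros R) u) = 0%E.
Proof.
move=> mu_ac; have msec := measurable_xsection u (measurable_affine_zeros R).
have [a_eq0|a_neq0] := eqVneq (to_C u.1) 0.
  suff -> : xsection (affine_zeros R) u = set0 by exact: measure0.
  apply/seteqP; split => x //.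
  by rewrite /xsection /= inE /affine_zeros /= a_eq0 => -[/eqP].
pose c := - to_C u.2 / to_C u.1.
have c_null := mu_ac _ (lebesgue2_set1 (complex.Re c, complex.Im c)).
apply: c_null => // x sec_x.
have [_ zero] : affine_zeros R (u, x) by move: sec_x; rewrite /xsection /= inE.
suff : to_C x = c by case: x {sec_x zero} => x1 x2 <-.
by apply: (mulIf a_neq0); rewrite mulrVK ?unitfE //; apply/eqP; rewrite -addr_eq0 zero.
Qed.

Section RandomDeterminant.
Context {R : realType} {d : measure_display} {Omega : measurableType d}
  {P : probability Omega R} {I : finType}
  {X : I -> {mfun Omega >-> (R * R)%type}}.
Hypothesis indep : mutually_independent P X.
Hypothesis X_ac : forall j, distribution P (X j) `<< @lebesgue2 R.

Local Notation sigma_off j0 := (g_sigma_algebraType (rects_off (X := X) j0)).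

Definition rand_mx {k} (f : 'I_k * 'I_k -> I) (w : Omega) : 'M[R[i]]_k :=
  \matrix_(a, b) to_C (X (f (a, b)) w).

Lemma cmeasurable_X_off j0 i :
  i != j0 -> cmeasurable (fun w : sigma_off j0 => to_C (X i w)).
Proof.
move=> i_neq_j0; apply: cmeasurable_to_C => _ S mS; apply: sub_sigma_algebra.
exists (fun k => if k == i then S else setT); split.
- by move=> k; case: eqP.
- by rewrite eq_sym (negbTE i_neq_j0).
- apply/seteqP; split => w /=.
    by move=> [_ XS] k _; case: eqP => [->|].
  by move=> XS_all; split => //; have := XS_all i Logic.I; rewrite eqxx.
Qed.

Lemma affine_zero_negligible {j0} {a b : sigma_off j0 -> R[i]} :
  cmeasurable a -> cmeasurable b ->
  P.-negligible [set w | a w != 0 /\ to_C (X j0 w) * a w + b w = 0].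
Proof.
move=> [ma1 ma2] [mb1 mb2].
pose Z w := ((complex.Re (a w), complex.Im (a w)), (complex.Re (b w), complex.Im (b w))).
have mZ : measurable_fun setT Z.
  by apply: measurable_fun_pair; apply: measurable_fun_pair.
have := negligible_off_xsection indep j0 mZ (measurable_affine_zeros R)
  (fun u => affine_zeros_xsection_null u (X_ac j0)).
by apply: negligibleS => w; rewrite /affine_zeros /= !to_C_ReIm.
Qed.

Lemma det_rand_mx_negligible {k} {f : 'I_k * 'I_k -> I} :
  injective f -> P.-negligible [set w | \det (rand_mx f w) = 0].
Proof.
move=> inj_f; elim: k f inj_f => [|k IH] f inj_f.
  apply: (negligibleS _ (negligible_set0 P)) => w /=.
  by rewrite det_mx00 => /eqP; rewrite oner_eq0.
set j0 := f (ord0, ord0).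
pose f' p := f (lift ord0 p.1, lift ord0 p.2).
have inj_f' : injective f'.
  move=> [a b] [a' b'] /inj_f/eqP; rewrite xpair_eqE /=.
  by move=> /andP[/eqP/lift_inj -> /eqP/lift_inj ->].
pose M0 w :=
  \matrix_(a, b) (if (a == ord0) && (b == ord0) then 0 else rand_mx f w a b).
have det_rand_mxE w :
    \det (rand_mx f w) = to_C (X j0 w) * \det (rand_mx f' w) + \det (M0 w).
  rewrite det_split_corner mxE; congr (_ * \det _ + _).
  by apply/matrixP => a b; rewrite !mxE.
have f_neq_j0 a b : (a, b) != (ord0, ord0) -> f (a, b) != j0.
  by apply: contra => /eqP/inj_f ->.
have m_minor : cmeasurable (fun w : sigma_off j0 => \det (rand_mx f' w)).
  apply: cmeasurable_det => a b; under eq_fun do rewrite mxE.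
  by apply: cmeasurable_X_off; rewrite f_neq_j0 // xpair_eqE !(eq_sym _ ord0) !neq_lift.
have m_rest : cmeasurable (fun w : sigma_off j0 => \det (M0 w)).
  apply: cmeasurable_det => a b; under eq_fun do rewrite !mxE.
  case ab_eq0 : ((a == ord0) && (b == ord0)); first exact: cmeasurable_cst.
  by apply: cmeasurable_X_off; rewrite f_neq_j0 // xpair_eqE ab_eq0.
have := negligibleU (IH f' inj_f') (affine_zero_negligible m_minor m_rest).
apply: negligibleS.
move=> w /=; rewrite det_rand_mxE.
by case: (eqVneq (\det (rand_mx f' w)) 0) => [->|minor_neq0 zero]; [left | right].
Qed.
End RandomDeterminant.

Theorem lemma1 (R : realType) (d : measure_display) (Omega : measurableType d)
  (P : probability Omega R) (m1 m2 r n1 n2 : nat)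
  (gamma : 'I_(n1 - n2) * 'I_n1 -> {mfun Omega >-> (R * R)%type}) :
  (n2 <= n1)%N -> (1 <= n1)%N ->
  mutually_independent P gamma ->
  identically_distributed P gamma ->
  (forall j, distribution P (gamma j) `<< @lebesgue2 R) ->
  {ae P, forall w : Omega,
    forall A : 'I_n1 -> 'M[R[i]]_(m1, m2),
      (forall k, \rank (A k) <= r)%N ->
      (forall i : 'I_(n1 - n2),
         \sum_(k < n1) to_C (gamma (i, k) w) *: A k = 0) ->
      (\rank (\mxrow_(k < n1) A k) <= n2 * r)%N /\
      ((exists S : {set 'I_n1},
          [/\ #|S| = n2,
              (forall k, k \in S -> \rank (A k) = r) &
              mxdirect (\sum_(k in S) <<(A k)^T>>)%MS]) ->
       (n2 * r <= m1)%N ->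
       \rank (\mxrow_(k < n1) A k) = (n2 * r)%N)}.
Proof.
move=> le_n2_n1 _ indep _ gamma_ac.
have le_k_n1 := leq_subr n2 n1.
pose f (p : 'I_(n1 - n2) * 'I_(n1 - n2)) := (p.1, widen_ord le_k_n1 p.2).
have inj_f : injective f.
  by move=> [a b] [a' b'] [-> /val_inj ->].
apply: (negligibleS _ (det_rand_mx_negligible indep gamma_ac inj_f)) => w /= not_ae.
apply: contrapT => det_neq0; apply: not_ae => A rankA rel.
pose G := \matrix_(i, l) to_C (gamma (i, l) w).
have unitG : \matrix_(a, b) G a (widen_ord le_k_n1 b) \in unitmx.
  rewrite unitmxE unitfE; apply/eqP; move: det_neq0; congr (~ \det _ = 0).
  by apply/matrixP => a b; rewrite !mxE.
have relG i : \sum_l G i l *: A l = 0 by under eq_bigr do rewrite mxE; exact: rel.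
have rank_le := mxrank_mxrow_rel_le_mul A le_k_n1 r G unitG relG rankA.
rewrite subKn // in rank_le; split => // -[S [cardS rankS dS]] _.
by apply/eqP; rewrite eqn_leq rank_le -cardS mxrank_mxrow_direct_ge.
Qed.
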